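(* Suppose the pair $(A,B)$ satisfies the Kalman condition (K) with integer $d_*$, and that $F$ is smooth and globally Lipschitz. Suppose there is a sequence $(y^{(n)})_{n\in\mathbb{N}}$ in $\mathbb{R}^d$ bounded away from $0$ such that $$\lim_{n\to\infty}|y^{(n)}|^{k-1}\,\|D^kF(y^{(n)})\|=0\quad\text{for each }k=1,2,\dots,d_*-1.$$ Then there exists a point $x_0\in\mathbb{R}^d$ at which the weak Hörmander condition (H) holds.
   Context: $A:\mathbb{R}^d\to\mathbb{R}^d$, $B:\mathbb{R}^n\to\mathbb{R}^d$ linear, $n\le d$, $F:\mathbb{R}^d\to\mathbb{R}^d$; $D^kF(y)$ is the $k$th Fréchet derivative at $y$ (a $k$-linear map) with its operator norm. $e_1,\dots,e_n$ is the standard basis of $\mathbb{R}^n$. (K) the columns of $B, AB, A^2B,\dots$ span $\mathbb{R}^d$; $d_*$ denotes the smallest positive integer such that $\operatorname{span}\{A^jBe_i: 0\le j\le d_*-1,\ 1\le i\le n\}=\mathbb{R}^d$. (H) at $x_0$: the vector fields $V_0$, $\mathcal{L}_{V_2}V_1$, $\mathcal{L}_{V_3}\mathcal{L}_{V_2}V_1,\dots$ with $V_0\in\mathcal{B}$ and $V_1,V_2,\dots\in\mathcal{B}\cup\{A+F\}$ span $\mathbb{R}^d$ at $x_0$, where $\mathcal{B}=\{Be_1,\dots,Be_n\}$ (constant vector fields), $A+F$ is the vector field $x\mapsto Ax+F(x)$, and $\mathcal{L}_GH=DH[G]-DG[H]$. *)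

From Stdlib Require Import Reals List ClassicalEpsilon.
From mathcomp Require Import ssreflect ssrfun ssrbool eqtype ssrnat fintype bigop.

Set Implicit Arguments.
Unset Strict Implicit.

Local Open Scope R_scope.

Definition vec (d : nat) := 'I_d -> R.

Definition vzero {d} : vec d := fun _ => 0.
Definition vadd {d} (u v : vec d) : vec d := fun i => u i + v i.
Definition vsub {d} (u v : vec d) : vec d := fun i => u i - v i.
Definition vscale {d} (a : R) (u : vec d) : vec d := fun i => a * u i.

Definition vnorm {d} (v : vec d) : R :=
  sqrt (\big[Rplus/0]_(i < d) (v i * v i)).

Definition e_basis {n} (i : 'I_n) : vec n := fun j => if i == j then 1 else 0.

Definition is_linear {m d} (L : vec m -> vec d) : Prop :=
  (forall u v, L (vadd u v) = vadd (L u) (L v)) /\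
  (forall a u, L (vscale a u) = vscale a (L u)).

Definition lin_comb {d} (l : list (R * vec d)) : vec d :=
  fold_right (fun p acc => vadd (vscale (fst p) (snd p)) acc) vzero l.

Definition spans_Rd {d} (P : vec d -> Prop) : Prop :=
  forall v : vec d, exists l : list (R * vec d),
    Forall (fun p => P (snd p)) l /\ v = lin_comb l.

Definition is_frechet {d} (f : vec d -> vec d) (y : vec d) (L : vec d -> vec d) : Prop :=
  is_linear L /\
  forall eps, 0 < eps -> exists delta, 0 < delta /\
    forall h : vec d, vnorm h < delta ->
      vnorm (vsub (vsub (f (vadd y h)) (f y)) (L h)) <= eps * vnorm h.

Definition frechet_differentiable {d} (f : vec d -> vec d) (y : vec d) : Prop :=
  exists L, is_frechet f y L.

Definition Dfr {d} (f : vec d -> vec d) (y : vec d) : vec d -> vec d :=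
  epsilon (inhabits (fun _ => vzero)) (fun L => is_frechet f y L).

(* k-th derivative D^k F(y), as a k-linear map evaluated on (hs 0, ..., hs (k-1)):
   D^0 F(y) = F(y),
   D^{k+1} F(y)[h_0, h_1, ..., h_k] = D( z |-> D^k F(z)[h_1, ..., h_k] )(y)[h_0]. *)
Fixpoint Dk {d} (k : nat) (F : vec d -> vec d) (y : vec d) (hs : nat -> vec d) : vec d :=
  match k with
  | O => F y
  | S k' => Dfr (fun z => Dk k' F z (fun i => hs (S i))) y (hs O)
  end.

Definition smooth {d} (F : vec d -> vec d) : Prop :=
  forall (k : nat) (hs : nat -> vec d) (y : vec d),
    frechet_differentiable (fun z => Dk k F z hs) y.

Definition Dk_values {d} (k : nat) (F : vec d -> vec d) (y : vec d) : R -> Prop :=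
  fun r => exists hs : nat -> vec d,
    (forall i, (i < k)%nat -> vnorm (hs i) <= 1) /\ r = vnorm (Dk k F y hs).

Definition Dk_opnorm {d} (k : nat) (F : vec d -> vec d) (y : vec d) : R :=
  epsilon (inhabits 0) (fun r => is_lub (Dk_values k F y) r).

Definition globally_lipschitz {d} (F : vec d -> vec d) : Prop :=
  exists K : R, forall x y, vnorm (vsub (F x) (F y)) <= K * vnorm (vsub x y).

Definition AjBe {n d} (A : vec d -> vec d) (B : vec n -> vec d) (j : nat) (i : 'I_n) : vec d :=
  Nat.iter j A (B (e_basis i)).

Definition kalman {n d} (A : vec d -> vec d) (B : vec n -> vec d) : Prop :=
  spans_Rd (fun v => exists (j : nat) (i : 'I_n), v = AjBe A B j i).

Definition kalman_span_upto {n d} (A : vec d -> vec d) (B : vec n -> vec d) (m : nat) : Prop :=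
  spans_Rd (fun v => exists (j : nat) (i : 'I_n), (j <= m - 1)%nat /\ v = AjBe A B j i).

Definition kalman_index {n d} (A : vec d -> vec d) (B : vec n -> vec d) (ds : nat) : Prop :=
  (0 < ds)%nat /\ kalman_span_upto A B ds /\
  forall m, (0 < m)%nat -> (m < ds)%nat -> ~ kalman_span_upto A B m.

Definition lie {d} (G H : vec d -> vec d) : vec d -> vec d :=
  fun x => vsub (Dfr H x (G x)) (Dfr G x (H x)).

Definition in_Bfields {n d} (B : vec n -> vec d) (V : vec d -> vec d) : Prop :=
  exists i : 'I_n, V = (fun _ => B (e_basis i)).

Definition in_BAF {n d} (A : vec d -> vec d) (B : vec n -> vec d) (F : vec d -> vec d)
  (V : vec d -> vec d) : Prop :=
  in_Bfields B V \/ V = (fun x => vadd (A x) (F x)).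

Inductive bracket {n d} (A : vec d -> vec d) (B : vec n -> vec d) (F : vec d -> vec d)
  : (vec d -> vec d) -> Prop :=
  | br_base V1 V2 : in_BAF A B F V1 -> in_BAF A B F V2 -> bracket A B F (lie V2 V1)
  | br_step W V : bracket A B F W -> in_BAF A B F V -> bracket A B F (lie V W).

Definition hormander {n d} (A : vec d -> vec d) (B : vec n -> vec d) (F : vec d -> vec d)
  (x0 : vec d) : Prop :=
  spans_Rd (fun v => exists V, (in_Bfields B V \/ bracket A B F V) /\ v = V x0).

(* Let W_0 = B e_i and W_(j+1) = L_(A+F) W_j. Formally, W_j(x) is (-1)^j A^j B e_i
   plus a combination of terms D^kF(x)[T_1, ..., T_k], k <= j, whose arguments are
   again such expressions. Since A+F grows at most linearly (F is Lipschitz) and |x|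
   is bounded below along the sequence, each such term is O(|x|^(k-1) |D^kF(x)|), so
   W_j(y^(n)) -> (-1)^j A^j B e_i for j < d_*. By (K) these limits span R^d, and
   spanning is an open condition (a determinant is continuous), so the W_j(y^(n))
   span R^d for some n. *)

From Stdlib Require Import Reals Lra Lia Psatz ClassicalEpsilon FunctionalExtensionality List.
From HB Require Import structures.
From mathcomp Require Import ssreflect ssrfun ssrbool eqtype ssrnat seq fintype bigop.
From mathcomp Require Import ssralg matrix Rstruct zify.
Set Implicit Arguments.
Unset Strict Implicit.
Local Open Scope R_scope.

HB.instance Definition _ := Monoid.isComLaw.Build R 0 Rplus
  (fun x y z => esym (Rplus_assoc x y z)) Rplus_comm Rplus_0_l.

Ltac vext := apply: functional_extensionality => ?; rewrite /vsub /vadd /vscale /vzero /=; ring.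

Section VectorSpace.
Variable d : nat.
Implicit Types u v w : vec d.

Lemma vaddA : associative (@vadd d). Proof. by move=> u v w; vext. Qed.
Lemma vaddC : commutative (@vadd d). Proof. by move=> u v; vext. Qed.
Lemma vadd0 : left_id (@vzero d) (@vadd d). Proof. by move=> u; vext. Qed.

End VectorSpace.

HB.instance Definition _ d := Monoid.isComLaw.Build (vec d) vzero (@vadd d)
  (@vaddA d) (@vaddC d) (@vadd0 d).

Lemma sumR_le (I : Type) (r : seq I) (P : pred I) (f g : I -> R) :
  (forall i, P i -> f i <= g i) ->
  \big[Rplus/0]_(i <- r | P i) f i <= \big[Rplus/0]_(i <- r | P i) g i.
Proof. by move=> fg; apply: (big_ind2 (fun a b => a <= b)) => //; [lra | move=> *; lra]. Qed.

Lemma sumR_ge0 (I : Type) (r : seq I) (P : pred I) (f : I -> R) :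
  (forall i, P i -> 0 <= f i) -> 0 <= \big[Rplus/0]_(i <- r | P i) f i.
Proof. by move=> f0; apply: (big_ind (fun a => 0 <= a)) => //; [lra | move=> *; lra]. Qed.

Lemma prodR_ge0 (I : Type) (r : seq I) (f : I -> R) :
  (forall i, 0 <= f i) -> 0 <= \big[Rmult/1]_(i <- r) f i.
Proof. by move=> f0; apply: (big_ind (fun a => 0 <= a)) => //; [lra | move=> *; nra]. Qed.

Lemma sumR_scal (I : Type) (r : seq I) (a : R) (f : I -> R) :
  \big[Rplus/0]_(i <- r) (a * f i) = a * \big[Rplus/0]_(i <- r) f i.
Proof. by elim: r => [|x r IH]; rewrite ?big_nil ?big_cons ?IH; ring. Qed.

Lemma sumR_const_ord (n : nat) (c : R) : \big[Rplus/0]_(i < n) c = INR n * c.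
Proof. by rewrite big_const_ord; elim: n => [|n IH]; rewrite ?iterS ?IH ?S_INR /=; ring. Qed.

Lemma Rabs_eq0 x : Rabs x = 0 -> x = 0.
Proof. by move=> H; case: (Req_dec x 0) => // /Rabs_pos_lt; lra. Qed.

Section Norms.
Variable d : nat.
Implicit Types u v w : vec d.

(* All estimates use the l^1 norm, whose triangle inequality is immediate. *)
Definition norm1 v : R := \big[Rplus/0]_(i < d) Rabs (v i).

Lemma norm1_ge0 v : 0 <= norm1 v.
Proof. by apply: sumR_ge0 => i _; apply: Rabs_pos. Qed.

Lemma coord_le_norm1 v i : Rabs (v i) <= norm1 v.
Proof.
rewrite /norm1 (bigD1 i) //= -{1}[Rabs (v i)]Rplus_0_r.
by apply: Rplus_le_compat_l; apply: sumR_ge0 => j _; apply: Rabs_pos.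
Qed.

Lemma norm1_add u v : norm1 (vadd u v) <= norm1 u + norm1 v.
Proof. by rewrite /norm1 -big_split; apply: sumR_le => i _; apply: Rabs_triang. Qed.

Lemma norm1_scale a v : norm1 (vscale a v) = Rabs a * norm1 v.
Proof. by rewrite /norm1 -sumR_scal; apply: eq_bigr => i _; rewrite /vscale Rabs_mult. Qed.

Lemma norm1_sub u v : norm1 (vsub u v) <= norm1 u + norm1 v.
Proof.
have -> : vsub u v = vadd u (vscale (-1) v) by vext.
by apply: Rle_trans (norm1_add _ _) _; rewrite norm1_scale Rabs_Ropp Rabs_R1; lra.
Qed.

Lemma norm1_zero : norm1 (@vzero d) = 0.
Proof. by rewrite /norm1 big1 // => i _; rewrite /vzero Rabs_R0. Qed.

Lemma norm1_eq0 v : norm1 v = 0 -> v = vzero.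
Proof.
move=> v0; apply: functional_extensionality => i; apply: Rabs_eq0.
by have := coord_le_norm1 v i; have := Rabs_pos (v i); rewrite v0; lra.
Qed.

Lemma coord_le_vnorm v i : Rabs (v i) <= vnorm v.
Proof.
rewrite /vnorm -sqrt_Rsqr_abs; apply: sqrt_le_1_alt.
rewrite (bigD1 i) //= /Rsqr -{1}[v i * v i]Rplus_0_r.
by apply: Rplus_le_compat_l; apply: sumR_ge0 => j _; nra.
Qed.

Lemma vnorm_ge0 v : 0 <= vnorm v.
Proof. exact: sqrt_pos. Qed.

Lemma vnorm_le_norm1 v : vnorm v <= norm1 v.
Proof.
rewrite /vnorm -(sqrt_pow2 (norm1 v)); last exact: norm1_ge0.
apply: sqrt_le_1_alt.
set S1 := \big[Rplus/0]_(i < d) Rabs (v i).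
suff [] : \big[Rplus/0]_(i < d) (v i * v i) <= S1 ^ 2 /\ 0 <= S1 by [].
apply: (big_rec2 (fun s q => s <= q ^ 2 /\ 0 <= q)) => [|i s q _ [sq q0]]; first by split; lra.
have := Rabs_pos (v i).
have : Rabs (v i) * Rabs (v i) = v i * v i by rewrite -Rabs_mult Rabs_right //; nra.
by split; nra.
Qed.

Lemma norm1_le_vnorm v : norm1 v <= INR d * vnorm v.
Proof. by rewrite /norm1 -sumR_const_ord; apply: sumR_le => i _; apply: coord_le_vnorm. Qed.

Lemma vnorm_scale a v : vnorm (vscale a v) = Rabs a * vnorm v.
Proof.
rewrite /vnorm (_ : \big[Rplus/0]_(i < d) _ = (a * a) * \big[Rplus/0]_(i < d) (v i * v i)).
  rewrite sqrt_mult ?sqrt_Rsqr_abs //; first nra.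
  by apply: sumR_ge0 => i _; nra.
by rewrite -sumR_scal; apply: eq_bigr => i _; rewrite /vscale; ring.
Qed.

Lemma vnorm_eq0 v : vnorm v = 0 -> v = vzero.
Proof.
move=> v0; apply: functional_extensionality => i; apply: Rabs_eq0.
by have := coord_le_vnorm v i; have := Rabs_pos (v i); rewrite v0; lra.
Qed.

Lemma vnorm_zero : vnorm (@vzero d) = 0.
Proof. by have := vnorm_le_norm1 vzero; have := vnorm_ge0 vzero; rewrite norm1_zero; lra. Qed.

Lemma vsum_coord (I : Type) (r : seq I) (f : I -> vec d) j :
  (\big[vadd/vzero]_(i <- r) f i) j = \big[Rplus/0]_(i <- r) f i j.
Proof. by elim: r => [|x r IH]; rewrite ?big_nil ?big_cons //= /vadd IH. Qed.

Lemma vec_basis_expand v : v = \big[vadd/vzero]_(i < d) vscale (v i) (e_basis i).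
Proof.
apply: functional_extensionality => j; rewrite vsum_coord (bigD1 j) //= big1.
  by rewrite /vscale /e_basis eqxx; ring.
by move=> i ij; rewrite /vscale /e_basis (negbTE ij); ring.
Qed.

Lemma norm1_vsum (I : Type) (r : seq I) (f : I -> vec d) :
  norm1 (\big[vadd/vzero]_(i <- r) f i) <= \big[Rplus/0]_(i <- r) norm1 (f i).
Proof.
elim: r => [|x r IH]; rewrite ?big_nil ?big_cons ?norm1_zero; first lra.
by apply: Rle_trans (norm1_add _ _) _; lra.
Qed.

End Norms.

Arguments norm1 {d} v.

Section LinearMaps.
Variable d : nat.
Implicit Types (u v h : vec d) (L : vec d -> vec d).

Lemma linear0 L : is_linear L -> L vzero = vzero.
Proof. by case=> _ LZ; rewrite (_ : vzero = vscale 0 vzero); [rewrite LZ|]; vext. Qed.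

Lemma linearB L u v : is_linear L -> L (vsub u v) = vsub (L u) (L v).
Proof.
case=> LD LZ; rewrite (_ : vsub u v = vadd u (vscale (-1) v)); last by vext.
by rewrite LD LZ; vext.
Qed.

Lemma linear_vsum L (I : Type) (r : seq I) (f : I -> vec d) : is_linear L ->
  L (\big[vadd/vzero]_(i <- r) f i) = \big[vadd/vzero]_(i <- r) L (f i).
Proof.
move=> Llin; elim: r => [|a r IH]; rewrite ?big_nil ?big_cons; first exact: linear0.
by case: Llin => -> _; rewrite IH.
Qed.

Lemma linear_basis_expand L v : is_linear L ->
  L v = \big[vadd/vzero]_(i < d) vscale (v i) (L (e_basis i)).
Proof.
move=> Llin; rewrite {1}(vec_basis_expand v) linear_vsum //.
by apply: eq_bigr => i _; case: Llin => _ ->.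
Qed.

Definition lin_bound L : R := \big[Rplus/0]_(i < d) norm1 (L (e_basis i)).

Lemma lin_bound_ge0 L : 0 <= lin_bound L.
Proof. by apply: sumR_ge0 => i _; apply: norm1_ge0. Qed.

Lemma norm1_linear_le L h : is_linear L -> norm1 (L h) <= lin_bound L * norm1 h.
Proof.
move=> Llin; rewrite (linear_basis_expand h Llin); apply: Rle_trans (norm1_vsum _ _) _.
rewrite /lin_bound Rmult_comm -sumR_scal; apply: sumR_le => i _.
rewrite norm1_scale; apply: Rmult_le_compat_r; [exact: norm1_ge0 | exact: coord_le_norm1].
Qed.

Lemma linear_add L1 L2 : is_linear L1 -> is_linear L2 -> is_linear (fun h => vadd (L1 h) (L2 h)).
Proof. by move=> [D1 Z1] [D2 Z2]; split=> *; rewrite ?D1 ?D2 ?Z1 ?Z2; vext. Qed.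

Lemma linear_scale a L : is_linear L -> is_linear (fun h => vscale a (L h)).
Proof. by move=> [D1 Z1]; split=> *; rewrite ?D1 ?Z1; vext. Qed.

Lemma linear_comp L1 L2 : is_linear L1 -> is_linear L2 -> is_linear (fun h => L1 (L2 h)).
Proof. by move=> [D1 Z1] [D2 Z2]; split=> *; rewrite ?D2 ?Z2 ?D1 ?Z1. Qed.

Lemma linear_zero : is_linear (fun _ : vec d => @vzero d).
Proof. by split=> *; vext. Qed.

Lemma linear_coord_scale L (j : 'I_d) (w : vec d) : is_linear L ->
  is_linear (fun h => vscale (L h j) w).
Proof. by move=> [D1 Z1]; split=> *; rewrite ?D1 ?Z1; vext. Qed.

End LinearMaps.

Section LittleO.
Variable d : nat.
Implicit Types (h x : vec d) (r s : vec d -> vec d).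

Definition littleo (N : vec d -> R) r : Prop :=
  forall eps, 0 < eps -> exists delta, 0 < delta /\
    forall h, N h < delta -> N (r h) <= eps * N h.

Definition vanishes r : Prop :=
  forall eps, 0 < eps -> exists delta, 0 < delta /\
    forall h, norm1 h < delta -> norm1 (r h) <= eps.

Lemma littleo_equiv_norms (N1 N2 : vec d -> R) a b r :
  0 < a -> 0 < b -> (forall v, N1 v <= a * N2 v) -> (forall v, N2 v <= b * N1 v) ->
  littleo N2 r -> littleo N1 r.
Proof.
move=> a0 b0 N12 N21 r_o eps eps0.
have [|delta [delta0 small]] := r_o (eps / (a * b)); first by apply: Rdiv_lt_0_compat; nra.
exists (delta / b); split; first exact: Rdiv_lt_0_compat.
move=> h Nh; have N2h : N2 h < delta.
  apply: Rle_lt_trans (N21 h) _.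
  by have := Rmult_lt_compat_l b _ _ b0 Nh; rewrite /Rdiv -Rmult_assoc Rinv_r_simpl_m //; lra.
apply: Rle_trans (N12 _) _.
apply: Rle_trans (Rmult_le_compat_l _ _ _ (Rlt_le _ _ a0) (small h N2h)) _.
have -> : a * (eps / (a * b) * N2 h) = eps / b * N2 h by field; lra.
have := N21 h; have : 0 < eps / b by apply: Rdiv_lt_0_compat.
have -> : eps * N1 h = eps / b * (b * N1 h) by field; lra.
nra.
Qed.

Lemma littleo_le_near C r s : 0 <= C ->
  (exists delta, 0 < delta /\ forall h, norm1 h < delta -> norm1 (r h) <= C * norm1 (s h)) ->
  littleo norm1 s -> littleo norm1 r.
Proof.
move=> C0 [delta0 [delta00 rs]] s_o eps eps0.
have [|delta1 [delta10 small]] := s_o (eps / (C + 1)); first by apply: Rdiv_lt_0_compat; lra.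
exists (Rmin delta0 delta1); split; first exact: Rmin_pos.
move=> h hmin; have := Rmin_l delta0 delta1; have := Rmin_r delta0 delta1 => ? ?.
apply: Rle_trans (rs h ltac:(lra)) _.
apply: Rle_trans (Rmult_le_compat_l _ _ _ C0 (small h ltac:(lra))) _.
have := norm1_ge0 h; have : C * (eps / (C + 1)) <= eps.
  by apply: (Rmult_le_reg_r (C + 1)); [lra | field_simplify]; nra.
nra.
Qed.

Lemma littleo_zero : littleo norm1 (fun _ : vec d => @vzero d).
Proof.
move=> eps eps0; exists 1; split=> [|h _]; first lra.
by rewrite norm1_zero; have := norm1_ge0 h; nra.
Qed.

Lemma littleo_le C r s : 0 <= C ->
  (forall h, norm1 (r h) <= C * norm1 (s h)) -> littleo norm1 s -> littleo norm1 r.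
Proof. by move=> C0 rs; apply: littleo_le_near C0 _; exists 1; split; [lra | move=> h _]. Qed.

Lemma littleo_le2 r s1 s2 :
  (forall h, norm1 (r h) <= norm1 (s1 h) + norm1 (s2 h)) ->
  littleo norm1 s1 -> littleo norm1 s2 -> littleo norm1 r.
Proof.
move=> rs o1 o2 eps eps0.
have [|d1 [d10 small1]] := o1 (eps / 2); first lra.
have [|d2 [d20 small2]] := o2 (eps / 2); first lra.
exists (Rmin d1 d2); split; first exact: Rmin_pos.
move=> h hmin; have := Rmin_l d1 d2; have := Rmin_r d1 d2 => ? ?.
by have := rs h; have := small1 h ltac:(lra); have := small2 h ltac:(lra); lra.
Qed.

Lemma littleo_vanishes_mul C r s : 0 <= C ->
  (forall h, norm1 (r h) <= C * norm1 h * norm1 (s h)) -> vanishes s -> littleo norm1 r.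
Proof.
move=> C0 rs s_0 eps eps0.
have [|delta [delta0 small]] := s_0 (eps / (C + 1)); first by apply: Rdiv_lt_0_compat; lra.
exists delta; split=> // h hdelta; apply: Rle_trans (rs h) _.
have := norm1_ge0 h; have := small h hdelta; have : C * (eps / (C + 1)) <= eps.
  by apply: (Rmult_le_reg_r (C + 1)); [lra | field_simplify]; nra.
move=> ? ? ?; have : 0 <= C * norm1 h by nra.
nra.
Qed.

Lemma littleo_linear_eq0 L : is_linear L -> littleo norm1 L -> forall h, L h = vzero.
Proof.
move=> Llin L_o h; apply: norm1_eq0; apply: Rle_antisym; last exact: norm1_ge0.
suff small : forall eps, 0 < eps -> norm1 (L h) <= eps * norm1 h.
  apply: le_epsilon => eps eps0; have h0 := norm1_ge0 h.
  have := small (eps / (norm1 h + 1)) ltac:(apply: Rdiv_lt_0_compat; lra).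
  have -> : eps / (norm1 h + 1) * norm1 h = eps - eps / (norm1 h + 1) by field; lra.
  have : 0 < eps / (norm1 h + 1) by apply: Rdiv_lt_0_compat; lra.
  lra.
move=> eps eps0; have [delta [delta0 small]] := L_o eps eps0.
have h0 := norm1_ge0 h; set t := delta / (norm1 h + 1).
have t0 : 0 < t by apply: Rdiv_lt_0_compat; lra.
have := small (vscale t h); case: Llin => _ ->; rewrite !norm1_scale Rabs_right; last lra.
have th : t * norm1 h < delta.
  rewrite /t; apply: (Rmult_lt_reg_r (norm1 h + 1)); first lra.
  by field_simplify; [nra | lra].
move=> /(_ th) Lt; apply: (Rmult_le_reg_l t) => //; lra.
Qed.

Lemma vanishes_linear L : is_linear L -> vanishes L.
Proof.
move=> Llin eps eps0; have C0 := lin_bound_ge0 L.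
exists (eps / (lin_bound L + 1)); split; first by apply: Rdiv_lt_0_compat; lra.
move=> h hsmall; apply: Rle_trans (norm1_linear_le h Llin) _.
have := norm1_ge0 h; have : (lin_bound L + 1) * (eps / (lin_bound L + 1)) = eps by field; lra.
nra.
Qed.

Lemma vanishes_littleo r : littleo norm1 r -> vanishes r.
Proof.
move=> r_o eps eps0; have [delta [delta0 small]] := r_o 1 Rlt_0_1.
exists (Rmin delta eps); split; first exact: Rmin_pos.
move=> h hmin; have := Rmin_l delta eps; have := Rmin_r delta eps => ? ?.
by have := small h ltac:(lra); lra.
Qed.

Lemma vanishes_add r s : vanishes r -> vanishes s -> vanishes (fun h => vadd (r h) (s h)).
Proof.
move=> r0 s0 eps eps0.
have [|d1 [d10 small1]] := r0 (eps / 2); first lra.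
have [|d2 [d20 small2]] := s0 (eps / 2); first lra.
exists (Rmin d1 d2); split; first exact: Rmin_pos.
move=> h hmin; have := Rmin_l d1 d2; have := Rmin_r d1 d2 => ? ?.
apply: Rle_trans (norm1_add _ _) _.
by have := small1 h ltac:(lra); have := small2 h ltac:(lra); lra.
Qed.

End LittleO.

Arguments littleo_zero {d}.

Section Frechet.
Variable d : nat.
Implicit Types (f g u w : vec d -> vec d) (x h : vec d) (L : vec d -> vec d).

Definition frechet1 f x L : Prop :=
  is_linear L /\ littleo norm1 (fun h => vsub (vsub (f (vadd x h)) (f x)) (L h)).

Lemma frechet1P f x L : is_frechet f x L <-> frechet1 f x L.
Proof.
have d0 := pos_INR d.
have N1 : forall v : vec d, norm1 v <= (INR d + 1) * vnorm v.
  by move=> v; have := norm1_le_vnorm v; have := vnorm_ge0 v; nra.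
have N2 : forall v : vec d, vnorm v <= 1 * norm1 v.
  by move=> v; rewrite Rmult_1_l; apply: vnorm_le_norm1.
split=> -[Llin rem]; split=> //.
- by apply: (littleo_equiv_norms _ _ N1 N2 rem); lra.
- by apply: (littleo_equiv_norms _ _ N2 N1 rem); lra.
Qed.


Lemma frechet1_unique f x L1 L2 : frechet1 f x L1 -> frechet1 f x L2 -> L1 = L2.
Proof.
move=> [L1lin rem1] [L2lin rem2]; apply: functional_extensionality => h.
have D12 : is_linear (fun h => vadd (L1 h) (vscale (-1) (L2 h))).
  by apply: linear_add => //; apply: linear_scale.
have o12 : littleo norm1 (fun h => vadd (L1 h) (vscale (-1) (L2 h))).
  apply: littleo_le2 rem2 rem1 => k /=.
  have -> : vadd (L1 k) (vscale (-1) (L2 k))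
    = vsub (vsub (vsub (f (vadd x k)) (f x)) (L2 k))
           (vsub (vsub (f (vadd x k)) (f x)) (L1 k)) by vext.
  exact: norm1_sub.
apply: functional_extensionality => i.
by have := equal_f (littleo_linear_eq0 D12 o12 h) i; rewrite /vadd /vscale /vzero; lra.
Qed.

Lemma frechet1_Dfr f x : frechet_differentiable f x -> frechet1 f x (Dfr f x).
Proof. by move=> fdiff; apply/frechet1P; apply: (epsilon_spec (inhabits (fun _ => vzero))). Qed.

Lemma Dfr_frechet1 f x L : frechet1 f x L -> Dfr f x = L.
Proof.
move=> fL; apply: esym (frechet1_unique fL _).
by apply: frechet1_Dfr; exists L; apply/frechet1P.
Qed.

Lemma frechet1_ext f g x L L' : (forall z, f z = g z) -> (forall h, L h = L' h) ->
  frechet1 f x L -> frechet1 g x L'.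
Proof.
move=> fg LL'.
have -> : g = f by apply: functional_extensionality => z; rewrite fg.
by have -> : L' = L by apply: functional_extensionality => h; rewrite LL'.
Qed.

Lemma frechet1_vanishes f x L : frechet1 f x L -> vanishes (fun h => vsub (f (vadd x h)) (f x)).
Proof.
move=> [Llin rem]; have := vanishes_add (vanishes_littleo rem) (vanishes_linear Llin).
by congr vanishes; do 2![apply: functional_extensionality => ?]; rewrite /vsub /vadd; ring.
Qed.

Lemma frechet1_const (c : vec d) x : frechet1 (fun _ => c) x (fun _ => vzero).
Proof.
split; first exact: linear_zero.
apply: littleo_le (Rle_refl 0) _ littleo_zero => h /=.
by rewrite (_ : vsub _ _ = vzero) ?norm1_zero; [lra | vext].
Qed.

Lemma frechet1_linear L x : is_linear L -> frechet1 L x L.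
Proof.
move=> Llin; split=> //; apply: littleo_le (Rle_refl 0) _ littleo_zero => h.
case: (Llin) => LD _; rewrite LD (_ : vsub _ _ = vzero) ?norm1_zero; [lra | vext].
Qed.

Lemma frechet1_add f g x Lf Lg : frechet1 f x Lf -> frechet1 g x Lg ->
  frechet1 (fun z => vadd (f z) (g z)) x (fun h => vadd (Lf h) (Lg h)).
Proof.
move=> [Lflin remf] [Lglin remg]; split; first exact: linear_add.
apply: littleo_le2 remf remg => h; apply: Rle_trans (norm1_add _ _); right; congr norm1; vext.
Qed.

Lemma frechet1_sub f g x Lf Lg : frechet1 f x Lf -> frechet1 g x Lg ->
  frechet1 (fun z => vsub (f z) (g z)) x (fun h => vsub (Lf h) (Lg h)).
Proof.
move=> [Lflin remf] [Lglin remg]; split.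
  have := linear_add Lflin (linear_scale (-1) Lglin).
  congr is_linear; do 2![apply: functional_extensionality => ?].
  by rewrite /vsub /vadd /vscale; ring.
apply: littleo_le2 remf remg => h; apply: Rle_trans (norm1_sub _ _); right; congr norm1; vext.
Qed.

Lemma frechet1_scale a f x L : frechet1 f x L ->
  frechet1 (fun z => vscale a (f z)) x (fun h => vscale a (L h)).
Proof.
move=> [Llin rem]; split; first exact: linear_scale.
apply: littleo_le (Rabs_pos a) _ rem => h; rewrite -norm1_scale; right; congr norm1; vext.
Qed.

Lemma frechet1_comp_linear (M : vec d -> vec d) f x L : is_linear M -> frechet1 f x L ->
  frechet1 (fun z => M (f z)) x (fun h => M (L h)).
Proof.
move=> Mlin [Llin rem]; split; first exact: linear_comp.
apply: littleo_le (lin_bound_ge0 M) _ rem => h /=.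
by rewrite -!(linearB _ _ Mlin); apply: norm1_linear_le.
Qed.

Lemma frechet1_vsum (I : Type) (r : seq I) (f L : I -> vec d -> vec d) x :
  (forall i, frechet1 (f i) x (L i)) ->
  frechet1 (fun z => \big[vadd/vzero]_(i <- r) f i z) x (fun h => \big[vadd/vzero]_(i <- r) L i h).
Proof.
move=> fL; elim: r => [|a r IH].
  by apply: frechet1_ext (frechet1_const vzero x) => *; rewrite big_nil.
by apply: frechet1_ext (frechet1_add (fL a) IH) => *; rewrite big_cons.
Qed.

Lemma frechet1_coord_scale u w Du Dw x (j : 'I_d) : frechet1 u x Du -> frechet1 w x Dw ->
  frechet1 (fun z => vscale (u z j) (w z))
    x (fun h => vadd (vscale (Du h j) (w x)) (vscale (u x j) (Dw h))).
Proof.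
move=> uD wD; have dw0 := frechet1_vanishes wD.
case: uD wD => Dulin remu [Dwlin remw].
split; first by apply: linear_add; [apply: linear_coord_scale | apply: linear_scale].
set eu := fun h => vsub (vsub (u (vadd x h)) (u x)) (Du h).
set dw := fun h => vsub (w (vadd x h)) (w x).
set ew := fun h => vsub (vsub (w (vadd x h)) (w x)) (Dw h).
(* the remainder is eu(h)_j w(x+h) + Du(h)_j dw(h) + u(x)_j ew(h) *)
have rem1 : littleo norm1 (fun h => vscale (eu h j) (w (vadd x h))).
  apply: (littleo_le_near (C := norm1 (w x) + 1)) remu; first by have := norm1_ge0 (w x); lra.
  have [delta [delta0 small]] := dw0 1 Rlt_0_1; exists delta; split=> // h hdelta.
  rewrite norm1_scale Rmult_comm; apply: Rmult_le_compat; try exact: Rabs_pos; try exact: norm1_ge0.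
  + rewrite (_ : w (vadd x h) = vadd (w x) (dw h)); last by rewrite /dw; vext.
    by apply: Rle_trans (norm1_add _ _) _; have := small h hdelta; rewrite /dw; lra.
  + exact: coord_le_norm1.
have rem2 : littleo norm1 (fun h => vscale (Du h j) (dw h)).
  apply: (littleo_vanishes_mul (lin_bound_ge0 Du)) dw0 => h.
  rewrite norm1_scale; apply: Rmult_le_compat_r; first exact: norm1_ge0.
  exact: Rle_trans (coord_le_norm1 _ _) (norm1_linear_le _ Dulin).
have rem3 : littleo norm1 (fun h => vscale (u x j) (ew h)).
  by apply: littleo_le (Rabs_pos (u x j)) _ remw => h; rewrite norm1_scale; right.
apply: littleo_le2
  (fun h => vadd (vscale (eu h j) (w (vadd x h))) (vscale (Du h j) (dw h))) _ _ _ rem3.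
- move=> h /=; apply: Rle_trans (norm1_add _ _); right; congr norm1; rewrite /eu /dw /ew; vext.
- by apply: littleo_le2 rem1 rem2 => h; apply: norm1_add.
Qed.

Lemma frechet1_apply_linear (Psi DPsi : vec d -> vec d -> vec d) u Du x :
  (forall v, frechet1 (fun z => Psi z v) x (DPsi v)) -> (forall z, is_linear (Psi z)) ->
  frechet1 u x Du ->
  frechet1 (fun z => Psi z (u z)) x (fun h => vadd (DPsi (u x) h) (Psi x (Du h))).
Proof.
move=> PsiD Psilin uD.
have DPsi_lin : forall v h, DPsi v h = \big[vadd/vzero]_(j < d) vscale (v j) (DPsi (e_basis j) h).
  move=> v h.
  suff -> : DPsi v = fun h => \big[vadd/vzero]_(j < d) vscale (v j) (DPsi (e_basis j) h) by [].
  apply: (frechet1_unique (PsiD v)).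
  apply: frechet1_ext
    (frechet1_vsum (index_enum 'I_d) (fun j => frechet1_scale (v j) (PsiD (e_basis j)))) => //.
  by move=> z; rewrite -linear_basis_expand.
apply: frechet1_ext
  (frechet1_vsum (index_enum 'I_d) (fun j => frechet1_coord_scale j uD (PsiD (e_basis j)))).
- by move=> z; rewrite -linear_basis_expand.
- by move=> h; rewrite big_split /= vaddC -linear_basis_expand // DPsi_lin.
Qed.

End Frechet.

Section ArgumentUpdates.
Variable d : nat.
Implicit Types (hs : nat -> vec d) (v w : vec d).

Definition hcons w hs : nat -> vec d := fun i => if i is i'.+1 then hs i' else w.
Definition upd hs (i : nat) w : nat -> vec d := fun j => if j == i then w else hs j.

Lemma upd_id hs i : upd hs i (hs i) = hs.
Proof. by apply: functional_extensionality => j; rewrite /upd; case: eqP => [->|]. Qed.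

Lemma upd_other hs i j w : j <> i -> upd hs i w j = hs j.
Proof. by rewrite /upd; case: eqP. Qed.

End ArgumentUpdates.

Section Multilinear.
Variables (d k : nat) (Phi : (nat -> vec d) -> vec d).
Hypothesis Phi_linear : forall hs i, (i < k)%nat -> is_linear (fun v => Phi (upd hs i v)).
Hypothesis Phi_ext : forall hs hs', (forall i, (i < k)%nat -> hs i = hs' i) -> Phi hs = Phi hs'.

Lemma multilinear_upd_scale hs i a v : (i < k)%nat ->
  Phi (upd hs i (vscale a v)) = vscale a (Phi (upd hs i v)).
Proof. by move=> ik; case: (Phi_linear hs ik) => _ ->. Qed.

(* Induction on the number m of free slots: expanding slot m in the standard
   basis reduces to m free slots. *)
Lemma multilinear_bounded_free m : (m <= k)%nat -> forall c : nat -> vec d, exists M,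
  forall hs, (forall i, (i < m)%nat -> vnorm (hs i) <= 1) ->
    (forall i, (m <= i)%nat -> hs i = c i) -> norm1 (Phi hs) <= M.
Proof.
elim: m => [|m IH] mk c.
  exists (norm1 (Phi c)) => hs _ hsc.
  have -> : hs = c by apply: functional_extensionality => i; apply: hsc.
  exact: Rle_refl.
have [Mj HMj] := ClassicalEpsilon.choice (fun (j : 'I_d) M => forall hs,
  (forall i, (i < m)%nat -> vnorm (hs i) <= 1) ->
  (forall i, (m <= i)%nat -> hs i = upd c m (e_basis j) i) -> norm1 (Phi hs) <= M)
  (fun j => IH (ltnW mk) _).
exists (\big[Rplus/0]_(j < d) Rabs (Mj j)) => hs hs1 hsc.
rewrite -(upd_id hs m) (linear_basis_expand (hs m) (Phi_linear hs mk)).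
apply: Rle_trans (norm1_vsum _ _) _; apply: sumR_le => j _; rewrite norm1_scale.
have hmj : Rabs (hs m j) <= 1 by apply: Rle_trans (coord_le_vnorm _ _) (hs1 m (ltnSn m)).
have : norm1 (Phi (upd hs m (e_basis j))) <= Mj j.
  apply: HMj => i im.
  - by rewrite upd_other; [apply: hs1; apply: ltnW | move=> ei; rewrite ei ltnn in im].
  - rewrite /upd; case: eqP => // /eqP ne; apply: hsc.
    by rewrite ltn_neqAle eq_sym ne im.
have := norm1_ge0 (Phi (upd hs m (e_basis j))); have := Rabs_pos (hs m j); have := Rle_abs (Mj j).
nra.
Qed.

Lemma multilinear_bounded : exists M, forall hs,
  (forall i, (i < k)%nat -> vnorm (hs i) <= 1) -> vnorm (Phi hs) <= M.
Proof.
have [M HM] := multilinear_bounded_free (leqnn k) (fun _ => vzero).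
exists M => hs hs1; set hs0 := fun i => if (i < k)%nat then hs i else vzero.
rewrite (Phi_ext (hs' := hs0)) => [|i ik]; last by rewrite /hs0 ik.
apply: Rle_trans (vnorm_le_norm1 _) _; apply: HM => i ik; rewrite /hs0.
  by rewrite ik; apply: hs1.
by rewrite ltnNge ik.
Qed.

Lemma multilinear_le_prod M :
  (forall hs, (forall i, (i < k)%nat -> vnorm (hs i) <= 1) -> vnorm (Phi hs) <= M) ->
  forall hs, vnorm (Phi hs) <= M * \big[Rmult/1]_(i < k) vnorm (hs i).
Proof.
move=> PhiM; have M0 : 0 <= M.
  by apply: Rle_trans (vnorm_ge0 _) (PhiM (fun _ => vzero) _) => i _; rewrite vnorm_zero; lra.
suff gen : forall m, (m <= k)%nat -> forall hs,
    (forall i, (m <= i)%nat -> (i < k)%nat -> vnorm (hs i) <= 1) ->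
    vnorm (Phi hs) <= M * \big[Rmult/1]_(i < m) vnorm (hs i).
  by move=> hs; apply: gen => // i ki ik; move: (leq_ltn_trans ki ik); rewrite ltnn.
elim=> [|m IH] mk hs hs1.
  by rewrite big_ord0 Rmult_1_r; apply: PhiM => i; apply: hs1.
have prod0 : 0 <= \big[Rmult/1]_(i < m) vnorm (hs i) by apply: prodR_ge0 => i; apply: vnorm_ge0.
rewrite big_ord_recr /=; case: (Req_dec (vnorm (hs m)) 0) => [/vnorm_eq0 hm0 | hm0].
  have -> : Phi hs = vzero by rewrite -(upd_id hs m) hm0; exact: linear0 (Phi_linear hs mk).
  by rewrite hm0 vnorm_zero; nra.
have hm_pos : 0 < vnorm (hs m) by have := vnorm_ge0 (hs m); lra.
set hs' := upd hs m (vscale (/ vnorm (hs m)) (hs m)).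
have hs'1 : forall i, (m <= i)%nat -> (i < k)%nat -> vnorm (hs' i) <= 1.
  move=> i mi ik; rewrite /hs' /upd; case: eqP => [_|/eqP ne].
    rewrite vnorm_scale Rabs_right ?Rinv_l; try lra.
    by apply: Rle_ge; apply: Rlt_le; apply: Rinv_0_lt_compat.
  by apply: hs1 => //; rewrite ltn_neqAle eq_sym ne mi.
have prod' : \big[Rmult/1]_(i < m) vnorm (hs' i) = \big[Rmult/1]_(i < m) vnorm (hs i).
  apply: eq_bigr => i _; rewrite /hs' upd_other // => ei.
  by have := ltn_ord i; rewrite ei ltnn.
have := IH (ltnW mk) hs' hs'1; rewrite prod' => IHm.
have -> : Phi hs = vscale (vnorm (hs m)) (Phi hs').
  rewrite /hs' multilinear_upd_scale // upd_id.
  by apply: functional_extensionality => j; rewrite /vscale; field.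
rewrite vnorm_scale Rabs_right; last lra.
have -> : M * (\big[Rmult/1]_(i < m) vnorm (hs i) * vnorm (hs m))
  = vnorm (hs m) * (M * \big[Rmult/1]_(i < m) vnorm (hs i)) by ring.
by apply: Rmult_le_compat_l; lra.
Qed.

End Multilinear.

Section HigherDerivatives.
Variables (d : nat) (F : vec d -> vec d).
Hypothesis F_smooth : smooth F.
Implicit Types (hs : nat -> vec d) (x : vec d).

Lemma frechet1_Dk k hs x :
  frechet1 (fun z => Dk k F z hs) x (fun h => Dk k.+1 F x (hcons h hs)).
Proof. exact: frechet1_Dfr (F_smooth k hs x). Qed.

Lemma Dk_ext k hs hs' x : (forall i, (i < k)%nat -> hs i = hs' i) -> Dk k F x hs = Dk k F x hs'.
Proof.
elim: k hs hs' x => [|k IH] hs hs' x hs_eq //=.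
have -> : (fun z => Dk k F z (fun i => hs i.+1)) = (fun z => Dk k F z (fun i => hs' i.+1)).
  by apply: functional_extensionality => z; apply: IH => i ik; apply: hs_eq.
by rewrite hs_eq.
Qed.

Lemma Dk_linear_slot k hs i x : (i < k)%nat -> is_linear (fun v => Dk k F x (upd hs i v)).
Proof.
elim: k i hs x => [|k IH] [|i] hs x //= ik.
  by case: (frechet1_Dk k (fun j => hs j.+1) x) => Llin _; rewrite /upd /=.
set hs1 := fun j => hs j.+1.
have tail : forall v, (fun j => upd hs i.+1 v j.+1) = upd hs1 i v by [].
have lin_z : forall z, is_linear (fun v => Dk k F z (upd hs1 i v)) by move=> z; apply: IH.
have D : forall v, frechet1 (fun z => Dk k F z (upd hs1 i v)) x
    (Dfr (fun z => Dk k F z (upd hs1 i v)) x) by move=> v; apply: frechet1_Dfr.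
rewrite /upd /= -/(upd hs i.+1 _ 0).
split=> [u v | a u]; rewrite !tail.
- rewrite (_ : (fun z => _) = fun z => vadd (Dk k F z (upd hs1 i u)) (Dk k F z (upd hs1 i v))).
    by rewrite (Dfr_frechet1 (frechet1_add (D u) (D v))).
  by apply: functional_extensionality => z; case: (lin_z z) => ->.
- rewrite (_ : (fun z => _) = fun z => vscale a (Dk k F z (upd hs1 i u))).
    by rewrite (Dfr_frechet1 (frechet1_scale a (D u))).
  by apply: functional_extensionality => z; case: (lin_z z) => _ ->.
Qed.

Lemma Dk_opnorm_lub k x : is_lub (Dk_values k F x) (Dk_opnorm k F x).
Proof.
rewrite /Dk_opnorm; apply: epsilon_spec.
have [M HM] := multilinear_bounded (fun hs i => @Dk_linear_slot k hs i x)
  (fun hs hs' => @Dk_ext k hs hs' x).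
have bnd : bound (Dk_values k F x) by exists M => r [hs [hs1 ->]]; apply: HM.
have ne : exists r, Dk_values k F x r.
  exists (vnorm (Dk k F x (fun _ => vzero))), (fun _ => vzero); split=> // i _.
  by rewrite vnorm_zero; lra.
by have [L HL] := completeness _ bnd ne; exists L.
Qed.

Lemma vnorm_Dk_le k x hs :
  vnorm (Dk k F x hs) <= Dk_opnorm k F x * \big[Rmult/1]_(i < k) vnorm (hs i).
Proof.
apply: (multilinear_le_prod (fun hs i => @Dk_linear_slot k hs i x)) => hs' hs'1.
by case: (Dk_opnorm_lub k x) => ub _; apply: ub; exists hs'.
Qed.

Lemma Dk_opnorm_ge0 k x : 0 <= Dk_opnorm k F x.
Proof.
case: (Dk_opnorm_lub k x) => ub _; apply: Rle_trans (vnorm_ge0 (Dk k F x (fun _ => vzero))) _.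
by apply: ub; exists (fun _ => vzero); split=> // i _; rewrite vnorm_zero; lra.
Qed.

(* The arguments from slot m on are frozen, so that the induction can release
   one slot at a time; for m = k this is the chain rule for D^kF(x)[U(x)]. *)
Lemma frechet1_Dk_args k m x (U : vec d -> nat -> vec d) (DU : nat -> vec d -> vec d) :
  (m <= k)%nat ->
  (forall i, (i < m)%nat -> frechet1 (fun z => U z i) x (DU i)) ->
  (forall i z, (m <= i)%nat -> U z i = U x i) ->
  frechet1 (fun z => Dk k F z (U z)) x
    (fun h => vadd (Dk k.+1 F x (hcons h (U x)))
                   (\big[vadd/vzero]_(i < m) Dk k F x (upd (U x) i (DU i h)))).
Proof.
elim: m U => [|m IH] U mk UD Ufix.
  have U_const : forall z, U z = U x.
    by move=> z; apply: functional_extensionality => i; apply: Ufix.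
  apply: frechet1_ext (frechet1_Dk k (U x) x) => [z | h]; first by rewrite U_const.
  by rewrite big_ord0 vaddC vadd0.
set Psi := fun z v => Dk k F z (upd (U z) m v).
set DPsi := fun v h => vadd (Dk k.+1 F x (hcons h (upd (U x) m v)))
  (\big[vadd/vzero]_(i < m) Dk k F x (upd (upd (U x) m v) i (DU i h))).
have PsiD : forall v, frechet1 (fun z => Psi z v) x (DPsi v).
  move=> v; apply: (IH (fun z => upd (U z) m v) (ltnW mk)).
  - move=> i im; apply: frechet1_ext (UD i (ltnW im)) => // z.
    by rewrite upd_other // => ei; rewrite ei ltnn in im.
  - move=> i z mi; rewrite /upd; case: eqP => // /eqP ne.
    by apply: Ufix; rewrite ltn_neqAle eq_sym ne mi.
have := frechet1_apply_linear PsiD (fun z => Dk_linear_slot (U z) z mk) (UD m (ltnSn m)).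
apply: frechet1_ext => [z | h]; first by rewrite /Psi upd_id.
by rewrite /DPsi /Psi upd_id big_ord_recr /= vaddA.
Qed.

End HigherDerivatives.

Section Terms.
Variables (d : nat) (A F : vec d -> vec d).

(* Expressions for vector fields: constants, the drift A+F, images under A,
   and derivatives D^kF(x)[t_1, ..., t_k] of F evaluated on expressions. *)
Inductive term : Type :=
  | Tzero | Tb (b : vec d) | Tg | TA (t : term) | Tadd (t s : term) | Tsub (t s : term)
  | TD (ts : tlist)
with tlist : Type := Tnil | Tcons (t : term) (ts : tlist).

Scheme term_ind2 := Induction for term Sort Prop
  with tlist_ind2 := Induction for tlist Sort Prop.

Fixpoint tlen (ts : tlist) : nat := if ts is Tcons _ ts' then (tlen ts').+1 else 0%nat.

Fixpoint tnth (ts : tlist) (i : nat) : term :=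
  match ts, i with
  | Tnil, _ => Tzero
  | Tcons t _, O => t
  | Tcons _ ts', S i' => tnth ts' i'
  end.

Definition drift : vec d -> vec d := fun x => vadd (A x) (F x).

Fixpoint eval (t : term) (x : vec d) : vec d :=
  match t with
  | Tzero => vzero
  | Tb b => b
  | Tg => drift x
  | TA t => A (eval t x)
  | Tadd t s => vadd (eval t x) (eval s x)
  | Tsub t s => vsub (eval t x) (eval s x)
  | TD ts => Dk (tlen ts) F x (evalL ts x)
  end
with evalL (ts : tlist) (x : vec d) : nat -> vec d :=
  match ts with
  | Tnil => fun _ => vzero
  | Tcons t ts => hcons (eval t x) (evalL ts x)
  end.

(* [deriv dir t] is the derivative of [eval t] in the direction [eval dir];
   [dslots dir ctx ts] differentiates the arguments [ts] one at a time,
   [ctx] restoring the arguments already passed. *)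
Fixpoint deriv (dir t : term) {struct t} : term :=
  match t with
  | Tzero | Tb _ => Tzero
  | Tg => Tadd (TA dir) (TD (Tcons dir Tnil))
  | TA t => TA (deriv dir t)
  | Tadd t s => Tadd (deriv dir t) (deriv dir s)
  | Tsub t s => Tsub (deriv dir t) (deriv dir s)
  | TD ts => Tadd (TD (Tcons dir ts)) (dslots dir (fun l => l) ts)
  end
with dslots (dir : term) (ctx : tlist -> tlist) (ts : tlist) {struct ts} : term :=
  match ts with
  | Tnil => Tzero
  | Tcons t ts' =>
      Tadd (TD (ctx (Tcons (deriv dir t) ts'))) (dslots dir (fun l => ctx (Tcons t l)) ts')
  end.

Lemma evalL_nth ts x i : evalL ts x i = eval (tnth ts i) x.
Proof. by elim: ts i => [|t ts IH] [|i] //=. Qed.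

Lemma evalL_out ts x i : (tlen ts <= i)%nat -> evalL ts x i = vzero.
Proof. by elim: ts i => [|t ts IH] [|i] //= ?; apply: IH. Qed.

Lemma eval_dslots dir x ts ctx (Phi : (nat -> vec d) -> vec d) :
  (forall l, tlen l = tlen ts -> Dk (tlen (ctx l)) F x (evalL (ctx l) x) = Phi (evalL l x)) ->
  eval (dslots dir ctx ts) x =
  \big[vadd/vzero]_(i < tlen ts) Phi (upd (evalL ts x) i (eval (deriv dir (tnth ts i)) x)).
Proof.
elim: ts ctx Phi => [|t ts IH] ctx Phi ctxPhi /=; first by rewrite big_ord0.
rewrite big_ord_recl /= ctxPhi //.
rewrite (@IH (fun l => ctx (Tcons t l)) (fun L => Phi (hcons (eval t x) L))).
  congr vadd; first by congr Phi; apply: functional_extensionality => -[|j].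
  by apply: eq_bigr => i _; congr Phi; apply: functional_extensionality => -[|j].
by move=> l l_len /=; rewrite ctxPhi //= l_len.
Qed.

Hypothesis A_linear : is_linear A.
Hypothesis F_smooth : smooth F.

Lemma frechet1_eval t x : frechet1 (eval t) x (fun h => eval (deriv (Tb h) t) x).
Proof.
move: t x; apply: (@term_ind2
  (fun t => forall x, frechet1 (eval t) x (fun h => eval (deriv (Tb h) t) x))
  (fun ts => forall i x,
     frechet1 (eval (tnth ts i)) x (fun h => eval (deriv (Tb h) (tnth ts i)) x))).
- by move=> x; apply: frechet1_const.
- by move=> b x; apply: frechet1_const.
- move=> x; apply: frechet1_add; first exact: frechet1_linear.
  exact: frechet1_ext (frechet1_Dk F_smooth 0 (fun _ => vzero) x).
- by move=> t IH x; apply: frechet1_comp_linear.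
- by move=> t IH s IH' x; apply: frechet1_add.
- by move=> t IH s IH' x; apply: frechet1_sub.
- move=> ts IH x.
  have UD : forall i, (i < tlen ts)%nat ->
      frechet1 (fun z => evalL ts z i) x (fun h => eval (deriv (Tb h) (tnth ts i)) x).
    by move=> i _; apply: frechet1_ext (IH i x) => // z; rewrite evalL_nth.
  have Ufix : forall i z, (tlen ts <= i)%nat -> evalL ts z i = evalL ts x i.
    by move=> i z ?; rewrite !evalL_out.
  apply: frechet1_ext (frechet1_Dk_args F_smooth (leqnn _) UD Ufix) => // h /=.
  by rewrite (@eval_dslots _ x ts (fun l => l) (fun L => Dk (tlen ts) F x L)) // => l ->.
- by move=> i x; apply: (frechet1_const vzero).
- by move=> t IH ts IH' [|i] x /=; [apply: IH | apply: IH'].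
Qed.

Lemma eval_deriv_dir t dir x : eval (deriv dir t) x = eval (deriv (Tb (eval dir x)) t) x.
Proof.
move: t dir x; apply: (@term_ind2
  (fun t => forall dir x, eval (deriv dir t) x = eval (deriv (Tb (eval dir x)) t) x)
  (fun ts => forall i dir x,
     eval (deriv dir (tnth ts i)) x = eval (deriv (Tb (eval dir x)) (tnth ts i)) x)) => //=.
- by move=> t IH dir x; rewrite IH.
- by move=> t IH s IH' dir x; rewrite IH IH'.
- by move=> t IH s IH' dir x; rewrite IH IH'.
- move=> ts IH dir x; congr vadd.
  rewrite !(@eval_dslots _ x ts (fun l => l) (fun L => Dk (tlen ts) F x L)); try by move=> l ->.
  by apply: eq_bigr => i _; rewrite IH.
- by move=> t IH ts IH' [|i] dir x /=.
Qed.

Definition Tlie (t : term) : term := Tsub (deriv Tg t) (Tadd (TA t) (TD (Tcons t Tnil))).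

Lemma eval_Tlie t : eval (Tlie t) = lie drift (eval t).
Proof.
apply: functional_extensionality => x; rewrite /lie /=.
rewrite (Dfr_frechet1 (frechet1_eval t x)) (Dfr_frechet1 (frechet1_eval Tg x)).
by rewrite eval_deriv_dir.
Qed.

End Terms.

Lemma cv_const (a : R) : Un_cv (fun _ => a) a.
Proof. by move=> eps eps0; exists 0%nat => n _; rewrite /Rdist Rminus_diag Rabs_R0. Qed.

Lemma cv_scal0 (a : R) u : Un_cv u 0 -> Un_cv (fun m => a * u m) 0.
Proof. by move=> u0; have := CV_mult _ _ _ _ (cv_const a) u0; rewrite Rmult_0_r. Qed.

Lemma cv_add0 u v : Un_cv u 0 -> Un_cv v 0 -> Un_cv (fun m => u m + v m) 0.
Proof. by move=> u0 v0; have := CV_plus _ _ _ _ u0 v0; rewrite Rplus_0_r. Qed.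

Lemma cv_bounded u l : Un_cv u l -> exists M, forall m, Rabs (u m) <= M.
Proof.
move=> ul; have [M HM] := cauchy_bound _ (CV_Cauchy _ (exist _ _ (cv_cvabs _ _ ul))).
by exists M => m; apply: HM; exists m.
Qed.

Section Structure.
Variables (d : nat) (A F : vec d -> vec d).
Local Notation term := (term d).
Local Notation tlist := (tlist d).
Local Notation Tg := (Tg d).

Fixpoint lead (t : term) : term :=
  match t with
  | TA t => TA (lead t)
  | Tadd t s => Tadd (lead t) (lead s)
  | Tsub t s => Tsub (lead t) (lead s)
  | TD _ => Tzero d
  | t => t
  end.

(* [weighted N e t]: t uses derivatives of order at most N and grows at most like
   |x|^e, counting |A+F| ~ |x| and D^kF(x)[t_1,...,t_k] ~ |x|^(e_1+...+e_k-k+1),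
   which is what the hypothesis |x|^(k-1) |D^kF(x)| -> 0 allows. *)
Inductive weighted (N : nat) : nat -> term -> Prop :=
  | weighted_zero e : weighted N e (Tzero d)
  | weighted_b e b : weighted N e (Tb b)
  | weighted_g e : (1 <= e)%nat -> weighted N e Tg
  | weighted_A e t : weighted N e t -> weighted N e (TA t)
  | weighted_add e t s : weighted N e t -> weighted N e s -> weighted N e (Tadd t s)
  | weighted_sub e t s : weighted N e t -> weighted N e s -> weighted N e (Tsub t s)
  | weighted_D e s ts : weightedL N s ts -> (1 <= tlen ts)%nat -> (tlen ts <= N)%nat ->
      (s <= e + tlen ts - 1)%nat -> weighted N e (TD ts)
with weightedL (N : nat) : nat -> tlist -> Prop :=
  | weightedL_nil : weightedL N 0 (Tnil d)
  | weightedL_cons e s t ts : weighted N e t -> weightedL N s ts ->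
      weightedL N (e + s) (Tcons t ts).

Scheme weighted_ind2 := Induction for weighted Sort Prop
  with weightedL_ind2 := Induction for weightedL Sort Prop.

Lemma weighted_mono N N' : (N <= N')%nat ->
  (forall e t, weighted N e t -> weighted N' e t) /\
  (forall s ts, weightedL N s ts -> weightedL N' s ts).
Proof.
move=> NN'; split;
  [ apply: (@weighted_ind2 N (fun e t _ => weighted N' e t) (fun s ts _ => weightedL N' s ts))
  | apply: (@weightedL_ind2 N (fun e t _ => weighted N' e t) (fun s ts _ => weightedL N' s ts)) ];
  try by constructor.
all: by move=> e s ts _ IH ? ts_N ?; apply: weighted_D IH _ _ _ => //; apply: leq_trans ts_N NN'.
Qed.

Lemma weighted_deriv t N e : weighted N e t -> weighted N.+1 e (deriv Tg t).
Proof.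
move: t N e; apply: (@term_ind2 d
  (fun t => forall N e, weighted N e t -> weighted N.+1 e (deriv Tg t))
  (fun ts => forall N e s ctx,
     (forall l, tlen l = tlen ts -> weightedL N.+1 s l -> weighted N.+1 e (TD (ctx l))) ->
     weightedL N s ts -> weighted N.+1 e (dslots Tg ctx ts))) => /=.
- by constructor.
- by constructor.
- move=> N e w; inversion w; subst; apply: weighted_add; first by apply/weighted_A/weighted_g.
  apply: (@weighted_D _ _ (1 + 0)%nat) => //=; last by rewrite addn0 addnK.
  by apply: weightedL_cons; [apply: weighted_g | apply: weightedL_nil].
- by move=> t IH N e w; inversion w; subst; constructor; apply: IH.
- by move=> t IH s IH' N e w; inversion w; subst; constructor; [apply: IH | apply: IH'].
- by move=> t IH s IH' N e w; inversion w; subst; constructor; [apply: IH | apply: IH'].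
- move=> ts IH N e w; inversion w; subst; constructor.
  + apply: (@weighted_D _ _ (1 + s)%nat) => //=; last by lia.
    by constructor; [constructor | apply: (weighted_mono (leqnSn N)).2].
  + apply: (IH N e s) => // l l_len wl; apply: weighted_D wl _ _ _; rewrite l_len //.
    exact: leqW.
- by move=> N e s ctx _ _; constructor.
- move=> t IH ts IH' N e s ctx ctx_w w; inversion w; subst; constructor.
  + by apply: ctx_w => //; constructor; [apply: IH | apply: (weighted_mono (leqnSn N)).2].
  + apply: (IH' N e s0) => // l l_len wl; apply: ctx_w; first by rewrite /= l_len.
    by constructor => //; apply: (weighted_mono (leqnSn N)).1.
Qed.

Lemma weighted_Tlie N t : weighted N 0 t -> weighted N.+1 0 (Tlie t).
Proof.
have [monoT _] := weighted_mono (leqnSn N).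
move=> w; constructor; first exact: weighted_deriv.
constructor; first by constructor; apply: monoT.
apply: (@weighted_D _ _ (0 + 0)%nat) => //=.
by constructor; [apply: monoT | constructor].
Qed.

Inductive drift_free : term -> Prop :=
  | drift_free_zero : drift_free (Tzero d)
  | drift_free_b b : drift_free (Tb b)
  | drift_free_A t : drift_free t -> drift_free (TA t)
  | drift_free_add t s : drift_free t -> drift_free s -> drift_free (Tadd t s)
  | drift_free_sub t s : drift_free t -> drift_free s -> drift_free (Tsub t s)
  | drift_free_D ts : drift_free (TD ts).

Lemma drift_free_dslots ctx ts : drift_free (dslots Tg ctx ts).
Proof. by elim: ts ctx => [|t ts IH] ctx /=; constructor => //; constructor. Qed.

Lemma drift_free_deriv t : drift_free t -> drift_free (deriv Tg t).
Proof. by elim=> /= *; constructor; auto using drift_free_dslots, drift_free_D. Qed.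

Lemma drift_free_Tlie t : drift_free t -> drift_free (Tlie t).
Proof. by move=> t_free; constructor; [apply: drift_free_deriv | do 2!constructor]. Qed.

Hypothesis A_linear : is_linear A.

Lemma eval_lead_dslots x ctx ts : eval A F (lead (dslots Tg ctx ts)) x = vzero.
Proof. by elim: ts ctx => [|t ts IH] ctx //=; rewrite IH; vext. Qed.

Lemma eval_lead_deriv x t : drift_free t -> eval A F (lead (deriv Tg t)) x = vzero.
Proof.
elim=> //= [t' _ -> | t' s _ -> _ -> | t' s _ -> _ -> | ts]; try by vext.
- exact: linear0.
- by rewrite eval_lead_dslots; vext.
Qed.

Fixpoint ad_term (b : vec d) (j : nat) : term :=
  if j is j'.+1 then Tlie (ad_term b j') else Tb b.

Lemma ad_term_drift_free b j : drift_free (ad_term b j).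
Proof. by elim: j => [|j IH] /=; [constructor | apply: drift_free_Tlie]. Qed.

Lemma ad_term_weighted b j : weighted j 0 (ad_term b j).
Proof. by elim: j => [|j IH] /=; [constructor | apply: weighted_Tlie]. Qed.

Lemma eval_lead_ad_term b j x :
  eval A F (lead (ad_term b j)) x = vscale ((-1) ^ j) (Nat.iter j A b).
Proof.
elim: j => [|j IH] /=; first by vext.
rewrite IH eval_lead_deriv; last exact: ad_term_drift_free.
by case: A_linear => _ ->; vext.
Qed.

End Structure.

Section Estimates.
Variables (d : nat) (A F : vec d -> vec d) (ds : nat) (y : nat -> vec d) (c K : R).
Hypothesis A_linear : is_linear A.
Hypothesis F_smooth : smooth F.
Hypothesis c_pos : 0 < c.
Hypothesis y_large : forall m, c <= vnorm (y m).
Hypothesis F_lipschitz : forall x z, vnorm (vsub (F x) (F z)) <= K * vnorm (vsub x z).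
Hypothesis DkF_small : forall k : nat, (1 <= k)%nat -> (k <= ds - 1)%nat ->
  Un_cv (fun m => vnorm (y m) ^ (k - 1) * Dk_opnorm k F (y m)) 0.
Local Notation term := (term d).
Local Notation tlist := (tlist d).
Local Notation eval := (eval A F).
Local Notation evalL := (evalL A F).
Local Notation r m := (vnorm (y m)).

Lemma norm_y_pos m : 0 < r m.
Proof. by have := y_large m; lra. Qed.

Lemma norm_y_pow_ge0 m e : 0 <= r m ^ e.
Proof. by apply: pow_le; have := norm_y_pos m; lra. Qed.

Lemma norm_y_pow_le a b m : (a <= b)%nat -> r m ^ a <= / c ^ (b - a) * r m ^ b.
Proof.
move=> ab; have rm := norm_y_pos m.
have -> : r m ^ b = r m ^ a * r m ^ (b - a) by rewrite -pow_add; congr (_ ^ _); lia.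
have cba : 0 < c ^ (b - a) by apply: pow_lt.
have cr : c ^ (b - a) <= r m ^ (b - a) by apply: pow_incr; have := y_large m; lra.
have ra : 0 < r m ^ a by apply: pow_lt.
have -> : / c ^ (b - a) * (r m ^ a * r m ^ (b - a))
  = r m ^ a * (r m ^ (b - a) / c ^ (b - a)) by field; lra.
have : 1 <= r m ^ (b - a) / c ^ (b - a).
  by apply: (Rmult_le_reg_r (c ^ (b - a))) => //; rewrite Rmult_1_l /Rdiv Rmult_assoc Rinv_l; lra.
nra.
Qed.

Lemma drift_bigO : exists G, forall m, norm1 (drift A F (y m)) <= G * r m.
Proof.
have CA := lin_bound_ge0 A; have F00 := norm1_ge0 (F vzero); have d0 := pos_INR d.
exists (lin_bound A * INR d + INR d * Rabs K + norm1 (F vzero) / c) => m.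
have rm := norm_y_pos m; have ym := y_large m.
apply: Rle_trans (norm1_add _ _) _.
have HA : norm1 (A (y m)) <= lin_bound A * INR d * r m.
  apply: Rle_trans (norm1_linear_le _ A_linear) _; rewrite Rmult_assoc.
  by apply: Rmult_le_compat_l => //; apply: norm1_le_vnorm.
have HF : norm1 (F (y m)) <= INR d * Rabs K * r m + norm1 (F vzero).
  rewrite (_ : F (y m) = vadd (vsub (F (y m)) (F vzero)) (F vzero)); last by vext.
  apply: Rle_trans (norm1_add _ _) _; apply: Rplus_le_compat_r.
  apply: Rle_trans (norm1_le_vnorm _) _; rewrite Rmult_assoc; apply: Rmult_le_compat_l => //.
  apply: Rle_trans (F_lipschitz _ _) _; rewrite (_ : vsub (y m) vzero = y m); last by vext.
  by apply: Rmult_le_compat_r; [apply: vnorm_ge0 | apply: Rle_abs].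
have : norm1 (F vzero) <= norm1 (F vzero) / c * r m.
  have -> : norm1 (F vzero) / c * r m = norm1 (F vzero) * (r m / c) by field; lra.
  have : 1 <= r m / c.
    by apply: (Rmult_le_reg_r c) => //; rewrite Rmult_1_l /Rdiv Rmult_assoc Rinv_l; lra.
  nra.
lra.
Qed.

Definition eval_bigO e (t : term) :=
  exists M, forall m, norm1 (eval t (y m)) <= M * r m ^ e.

Definition lead_littleo e (t : term) := exists beta : nat -> R, Un_cv beta 0 /\
  forall m, norm1 (vsub (eval t (y m)) (eval (lead t) (y m))) <= beta m * r m ^ e.

Definition controlled e t := eval_bigO e t /\ lead_littleo e t.

Definition args_bigO s (ts : tlist) := exists M, forall m,
  \big[Rmult/1]_(i < tlen ts) vnorm (evalL ts (y m) i) <= M * r m ^ s.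

Lemma lead_littleo_id e t : lead t = t -> lead_littleo e t.
Proof.
move=> lead_t; exists (fun _ => 0); split=> [|m]; first exact: cv_const.
by rewrite lead_t (_ : vsub _ _ = vzero) ?norm1_zero; [lra | vext].
Qed.

Lemma controlled_zero e : controlled e (Tzero d).
Proof.
split; last exact: lead_littleo_id.
by exists 0 => m /=; rewrite norm1_zero; have := norm_y_pow_ge0 m e; lra.
Qed.

Lemma controlled_b e b : controlled e (Tb b).
Proof.
split; last exact: lead_littleo_id.
exists (norm1 b * / c ^ (e - 0)) => m /=.
by have := norm_y_pow_le m (leq0n e); have := norm1_ge0 b; rewrite /= => ? ?; nra.
Qed.

Lemma controlled_g e : (1 <= e)%nat -> controlled e (Tg d).
Proof.
move=> e1; split; last exact: lead_littleo_id.
have [G HG] := drift_bigO; exists (Rabs G * / c ^ (e - 1)) => m /=.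
have := norm_y_pow_le m e1; rewrite /= Rmult_1_r => re.
have : G * r m <= Rabs G * r m by apply: Rmult_le_compat_r; [apply: vnorm_ge0 | apply: Rle_abs].
by have := HG m; have := Rabs_pos G; nra.
Qed.

Lemma controlled_A e t : controlled e t -> controlled e (TA t).
Proof.
have CA := lin_bound_ge0 A.
move=> [[M HM] [beta [beta0 Hbeta]]]; split.
- exists (lin_bound A * M) => m /=; apply: Rle_trans (norm1_linear_le _ A_linear) _.
  by rewrite Rmult_assoc; apply: Rmult_le_compat_l.
- exists (fun m => lin_bound A * beta m); split; first exact: cv_scal0.
  move=> m /=; rewrite -linearB //; apply: Rle_trans (norm1_linear_le _ A_linear) _.
  by rewrite Rmult_assoc; apply: Rmult_le_compat_l.
Qed.

Lemma controlled_add e t s : controlled e t -> controlled e s -> controlled e (Tadd t s).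
Proof.
move=> [[M1 H1] [b1 [b10 Hb1]]] [[M2 H2] [b2 [b20 Hb2]]]; split.
- exists (M1 + M2) => m /=; apply: Rle_trans (norm1_add _ _) _.
  by have := H1 m; have := H2 m; lra.
- exists (fun m => b1 m + b2 m); split; first exact: cv_add0.
  move=> m /=; rewrite (_ : vsub _ _ = vadd (vsub (eval t (y m)) (eval (lead t) (y m)))
    (vsub (eval s (y m)) (eval (lead s) (y m)))); last by vext.
  apply: Rle_trans (norm1_add _ _) _.
  by have := Hb1 m; have := Hb2 m; lra.
Qed.

Lemma controlled_sub e t s : controlled e t -> controlled e s -> controlled e (Tsub t s).
Proof.
move=> [[M1 H1] [b1 [b10 Hb1]]] [[M2 H2] [b2 [b20 Hb2]]]; split.
- exists (M1 + M2) => m /=; apply: Rle_trans (norm1_sub _ _) _.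
  by have := H1 m; have := H2 m; lra.
- exists (fun m => b1 m + b2 m); split; first exact: cv_add0.
  move=> m /=; rewrite (_ : vsub _ _ = vsub (vsub (eval t (y m)) (eval (lead t) (y m)))
    (vsub (eval s (y m)) (eval (lead s) (y m)))); last by vext.
  apply: Rle_trans (norm1_sub _ _) _.
  by have := Hb1 m; have := Hb2 m; lra.
Qed.

Lemma args_bigO_nil : args_bigO 0 (Tnil d).
Proof. by exists 1 => m /=; rewrite big_ord0 /=; lra. Qed.

Lemma args_bigO_cons e s t ts :
  eval_bigO e t -> args_bigO s ts -> args_bigO (e + s) (Tcons t ts).
Proof.
move=> [M1 H1] [M2 H2]; exists (M1 * M2) => m /=.
rewrite big_ord_recl /= pow_add.
have prod0 : 0 <= \big[Rmult/1]_(i < tlen ts) vnorm (evalL ts (y m) i).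
  by apply: prodR_ge0 => i; apply: vnorm_ge0.
have -> : M1 * M2 * (r m ^ e * r m ^ s) = (M1 * r m ^ e) * (M2 * r m ^ s) by ring.
apply: Rmult_le_compat; [exact: vnorm_ge0 | exact: prod0 | | exact: H2].
exact: Rle_trans (vnorm_le_norm1 _) (H1 m).
Qed.

(* |D^kF(y)[t_1,...,t_k]| <= |D^kF(y)| |t_1|...|t_k| = O(|y|^(k-1) |D^kF(y)|) |y|^e. *)
Lemma controlled_D e s ts : args_bigO s ts -> (1 <= tlen ts)%nat -> (tlen ts <= ds - 1)%nat ->
  (s <= e + tlen ts - 1)%nat -> controlled e (TD ts).
Proof.
move=> [M HM] k1 kds se; set k := tlen ts in HM k1 kds se *.
set C := / c ^ (e + k - 1 - s).
have C0 : 0 <= C by apply/Rlt_le/Rinv_0_lt_compat/pow_lt.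
set beta := fun m => INR d * Rabs M * C * (r m ^ (k - 1) * Dk_opnorm k F (y m)).
have beta0 : Un_cv beta 0 by apply: cv_scal0; apply: DkF_small.
have bound : forall m, norm1 (eval (TD ts) (y m)) <= beta m * r m ^ e.
  move=> m /=; rewrite -/k; apply: Rle_trans (norm1_le_vnorm _) _.
  have d0 := pos_INR d; have op0 := Dk_opnorm_ge0 F_smooth k (y m).
  have prod_le : \big[Rmult/1]_(i < k) vnorm (evalL ts (y m) i)
      <= Rabs M * C * (r m ^ (k - 1) * r m ^ e).
    have E : r m ^ (e + k - 1) = r m ^ (k - 1) * r m ^ e by rewrite -pow_add; congr (_ ^ _); lia.
    have := norm_y_pow_le m se; rewrite E -/C => rs.
    apply: Rle_trans (HM m) _.
    apply: Rle_trans (Rmult_le_compat_r _ _ _ (norm_y_pow_ge0 m s) (Rle_abs M)) _.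
    by rewrite Rmult_assoc; apply: Rmult_le_compat_l; [apply: Rabs_pos | apply: rs].
  apply: Rle_trans (Rmult_le_compat_l _ _ _ d0 (vnorm_Dk_le F_smooth k (y m) (evalL ts (y m)))) _.
  have -> : beta m * r m ^ e
    = INR d * (Dk_opnorm k F (y m) * (Rabs M * C * (r m ^ (k - 1) * r m ^ e))).
    by rewrite /beta; ring.
  exact/(Rmult_le_compat_l _ _ _ d0)/(Rmult_le_compat_l _ _ _ op0).
split.
- have [Mb HMb] := cv_bounded beta0; exists Mb => m; apply: Rle_trans (bound m) _.
  by apply: Rmult_le_compat_r; [apply: norm_y_pow_ge0 | apply: Rle_trans (Rle_abs _) (HMb m)].
- exists beta; split=> // m /=.
  by rewrite (_ : vsub _ vzero = Dk (tlen ts) F (y m) (evalL ts (y m))); [apply: bound | vext].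
Qed.

Lemma weighted_controlled N e t : (N <= ds - 1)%nat -> weighted N e t -> controlled e t.
Proof.
move=> Nds w.
apply: (@weighted_ind2 d N (fun e t _ => controlled e t) (fun s ts _ => args_bigO s ts))
  => //; try by constructor.
- exact: controlled_zero.
- exact: controlled_b.
- by move=> *; apply: controlled_g.
- by move=> *; apply: controlled_A.
- by move=> *; apply: controlled_add.
- by move=> *; apply: controlled_sub.
- by move=> e' s ts _ args k1 kN se; apply: controlled_D args k1 (leq_trans kN Nds) se.
- exact: args_bigO_nil.
- by move=> e' s t' ts _ [bt _] _ args; apply: args_bigO_cons.
Qed.

Lemma ad_term_cv b j l : (j <= ds - 1)%nat ->
  Un_cv (fun m => eval (ad_term b j) (y m) l) (vscale ((-1) ^ j) (Nat.iter j A b) l).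
Proof.
move=> jds; have [_ [beta [beta0 Hbeta]]] := weighted_controlled jds (ad_term_weighted b j).
move=> eps eps0; have [N HN] := beta0 eps eps0; exists N => m mN.
have := HN m mN; have := Hbeta m; rewrite eval_lead_ad_term // pow_O Rmult_1_r /Rdist Rminus_0_r.
have := coord_le_norm1 (vsub (eval (ad_term b j) (y m)) (vscale ((-1) ^ j) (Nat.iter j A b))) l.
rewrite /vsub; have := Rle_abs (beta m); lra.
Qed.

End Estimates.

Section Spans.
Variable d : nat.

Lemma spans_Rd_mono (P Q : vec d -> Prop) : spans_Rd P -> (forall w, P w -> Q w) -> spans_Rd Q.
Proof.
move=> spanP PQ v; have [l [lP ->]] := spanP v; exists l; split=> //.
by apply: Forall_impl lP => p; apply: PQ.
Qed.

Lemma lin_comb_map (I : Type) (r : seq I) (a : I -> R) (f : I -> vec d) :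
  lin_comb (map (fun k => (a k, f k)) r) = \big[vadd/vzero]_(k <- r) vscale (a k) (f k).
Proof. by elim: r => [|x r IH] /=; rewrite ?big_nil ?big_cons // IH. Qed.

Lemma spans_familyP (I : finType) (u : I -> vec d) :
  spans_Rd (fun w => exists k, w = u k) <->
  forall w, exists a : I -> R, w = \big[vadd/vzero]_(k : I) vscale (a k) (u k).
Proof.
split=> [span w | coefs w].
  have [l [lu ->]] := span w; elim: l lu => [|[a w'] l IH] /= lu.
    by exists (fun _ => 0); rewrite big1 // => k _; vext.
  inversion lu as [|p l' uw lu']; subst; have [k0 /= ->] := uw; have [C ->] := IH lu'.
  exists (fun k => (if k == k0 then a else 0) + C k).
  apply: functional_extensionality => j; rewrite /vadd !vsum_coord /vscale.
  rewrite [RHS](eq_bigr (fun k => (if k == k0 then a * u k0 j else 0) + C k * u k j)); last first.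
    by move=> k _; case: eqP => [->|_]; ring.
  by rewrite big_split /= -big_mkcond big_pred1_eq.
have [a ->] := coefs w; exists (map (fun k => (a k, u k)) (index_enum I)).
split; last by rewrite lin_comb_map.
by apply/Forall_forall => p /in_map_iff [k [<- _]]; exists k.
Qed.

Lemma spans_Rd_rescale (I : Type) (P : vec d -> Prop) (u : I -> vec d) :
  spans_Rd P -> (forall w, P w -> exists a k, w = vscale a (u k)) ->
  spans_Rd (fun w => exists k, w = u k).
Proof.
move=> spanP Pu w; have [l [lP ->]] := spanP w; clear w.
elim: l lP => [|[a w] l IH] lP /=; first by exists nil.
inversion lP as [|p l' Pw lP']; subst; have [l' [l'u ->]] := IH lP'.
have [a' [k ->]] := Pu w Pw.
exists ((a * a', u k) :: l'); split; first by constructor=> //=; exists k.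
by rewrite /=; vext.
Qed.

End Spans.

Lemma cv_sum (I : Type) (r : seq I) (f : nat -> I -> R) (a : I -> R) :
  (forall i, Un_cv (fun m => f m i) (a i)) ->
  Un_cv (fun m => \big[Rplus/0]_(i <- r) f m i) (\big[Rplus/0]_(i <- r) a i).
Proof.
move=> fa; elim: r => [|x r IH].
  rewrite big_nil (_ : (fun m => _) = fun _ => 0); first exact: cv_const.
  by apply: functional_extensionality => m; rewrite big_nil.
rewrite big_cons (_ : (fun m => _) = fun m => Rplus (f m x) (\big[Rplus/0]_(i <- r) f m i)).
  exact: CV_plus.
by apply: functional_extensionality => m; rewrite big_cons.
Qed.

Lemma cv_prod (I : Type) (r : seq I) (f : nat -> I -> R) (a : I -> R) :
  (forall i, Un_cv (fun m => f m i) (a i)) ->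
  Un_cv (fun m => \big[Rmult/1]_(i <- r) f m i) (\big[Rmult/1]_(i <- r) a i).
Proof.
move=> fa; elim: r => [|x r IH].
  rewrite big_nil (_ : (fun m => _) = fun _ => 1); first exact: cv_const.
  by apply: functional_extensionality => m; rewrite big_nil.
rewrite big_cons (_ : (fun m => _) = fun m => Rmult (f m x) (\big[Rmult/1]_(i <- r) f m i)).
  exact: CV_mult.
by apply: functional_extensionality => m; rewrite big_cons.
Qed.

Section Perturbation.
Import GRing.Theory.
Local Open Scope ring_scope.

Lemma cv_det (n : nat) (M : nat -> 'M[R]_n) (L : 'M[R]_n) :
  (forall i j, Un_cv (fun m => M m i j) (L i j)) -> Un_cv (fun m => \det (M m)) (\det L).
Proof.
move=> ML; apply: cv_sum => s; apply: CV_mult; first exact: cv_const.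
by apply: cv_prod => i; apply: ML.
Qed.

(* If C is a left inverse of the family u (row l of C u is e_l), the matrices
   C v_m tend to the identity, so they are eventually invertible and the
   family v_m then spans as well. *)
Lemma spanning_family_perturb (d : nat) (I : finType) (u : I -> vec d) (v : nat -> I -> vec d) :
  (forall w, exists a : I -> R, w = \big[vadd/vzero]_(k : I) vscale (a k) (u k)) ->
  (forall k l, Un_cv (fun m => v m k l) (u k l)) ->
  exists m, forall w, exists a : I -> R, w = \big[vadd/vzero]_(k : I) vscale (a k) (v m k).
Proof.
move=> u_span uv.
have [C HC] := ClassicalEpsilon.choice _ (fun l : 'I_d => u_span (e_basis l)).
pose M m := (\matrix_(l, l') \sum_(k : I) C l k * v m k l' : 'M[R]_d).
have M1 : forall l l', Un_cv (fun m => M m l l') ((1%:M : 'M[R]_d) l l').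
  move=> l l'; rewrite (_ : (fun m => _) = fun m => \sum_(k : I) C l k * v m k l'); last first.
    by apply: functional_extensionality => m; rewrite mxE.
  have -> : (1%:M : 'M[R]_d) l l' = \sum_(k : I) C l k * u k l'.
    have := f_equal (fun w => w l') (HC l); rewrite vsum_coord /e_basis /vscale => <-.
    by rewrite mxE; case: (l == l').
  by apply: cv_sum => k; apply: CV_mult; [apply: cv_const | apply: uv].
have [N HN] := cv_det M1 Rlt_0_1.
have := HN N (le_n N); rewrite det1 /Rdist => detN.
have M_unit : M N \in unitmx.
  rewrite unitmxE unitfE; apply/eqP => det0; move: detN; rewrite det0.
  by rewrite Rabs_minus_sym Rminus_0_r Rabs_R1; lra.
exists N => w; pose X := (\row_l' w l' : 'rV[R]_d); pose Y := X *m invmx (M N).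
exists (fun k => \sum_(l < d) Y ord0 l * C l k); apply: functional_extensionality => l'.
rewrite vsum_coord (_ : w l' = X ord0 l'); last by rewrite mxE.
change (X ord0 l' = \sum_(k : I) (\sum_(l < d) Y ord0 l * C l k) * v N k l').
rewrite -[X](mulmxKV M_unit) -/Y mxE.
under [RHS]eq_bigr do rewrite mulr_suml.
rewrite exchange_big /=; apply: eq_bigr => l _; rewrite /M /= mxE mulr_sumr.
by apply: eq_bigr => k _; rewrite mulrA.
Qed.

End Perturbation.

Lemma kalman_span_signed (n d ds : nat) (A : vec d -> vec d) (B : vec n -> vec d) :
  (0 < ds)%nat -> kalman_span_upto A B ds ->
  spans_Rd (fun w => exists k : 'I_ds * 'I_n, w = vscale ((-1) ^ k.1) (AjBe A B k.1 k.2)).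
Proof.
move=> ds_pos span; apply: (spans_Rd_rescale span) => _ [j [i [jds ->]]].
have jds' : (j < ds)%nat by lia.
exists ((-1) ^ j), (Ordinal jds', i); apply: functional_extensionality => l.
by rewrite /vscale /= -Rmult_assoc -Rpow_mult_distr (_ : -1 * -1 = 1) ?pow1; ring.
Qed.

Lemma ad_term_hormander (n d : nat) (A : vec d -> vec d) (B : vec n -> vec d) (F : vec d -> vec d)
  (i : 'I_n) (j : nat) :
  is_linear A -> smooth F ->
  in_Bfields B (eval A F (ad_term (B (e_basis i)) j)) \/
  bracket A B F (eval A F (ad_term (B (e_basis i)) j)).
Proof.
move=> A_linear F_smooth; case: j => [|j]; first by left; exists i.
right; elim: j => [|j IH]; rewrite eval_Tlie //.
- by apply: br_base; [left; exists i | right].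
- by apply: br_step IH _; right.
Qed.

Theorem mainTheorem12 (n d : nat) (A : vec d -> vec d) (B : vec n -> vec d)
  (F : vec d -> vec d) (ds : nat) (y : nat -> vec d) :
  (n <= d)%nat ->
  is_linear A -> is_linear B ->
  kalman A B -> kalman_index A B ds ->
  smooth F -> globally_lipschitz F ->
  (exists c : R, 0 < c /\ forall m : nat, c <= vnorm (y m)) ->
  (forall k : nat, (1 <= k)%nat -> (k <= ds - 1)%nat ->
     Un_cv (fun m => vnorm (y m) ^ (k - 1) * Dk_opnorm k F (y m)) 0) ->
  exists x0 : vec d, hormander A B F x0.
Proof.
move=> _ A_linear _ _ [ds_pos [span_ds _]] F_smooth [K F_lip] [c [c_pos y_large]] DkF_small.
pose W (k : 'I_ds * 'I_n) := eval A F (ad_term (B (e_basis k.2)) k.1).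
have W_cv : forall k l, Un_cv (fun m => W k (y m) l) (vscale ((-1) ^ k.1) (AjBe A B k.1 k.2) l).
  move=> k l; apply: (ad_term_cv A_linear F_smooth c_pos y_large F_lip DkF_small).
  by have := ltn_ord k.1; lia.
have /spans_familyP span_lead := kalman_span_signed ds_pos span_ds.
have [m0 /spans_familyP span_m0] := spanning_family_perturb span_lead W_cv.
exists (y m0); apply: (spans_Rd_mono span_m0) => _ [k ->].
by exists (W k); split=> //; apply: ad_term_hormander.
Qed.
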